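(* In the ongoing market with warehouses described in the context, suppose $\alpha_2\ge1$, $\lambda\alpha_1<1$, and at time $t$ we have $t-\tau_i(t)\le1$ for all $i$ and $\sum_ip_ix_i\le M$. Then at time $t$, \[ \sum_iw_ip_i\le\frac{\phi}{1-\lambda\alpha_1}+M . \]
   Context: Market: $n$ goods with daily supply rates $w_i>0$, demand functions $x_i:(0,\infty)^n\to(0,\infty)$; $M>0$ is the daily supply of money. Dynamics: continuous time; prices $p(t)$ piecewise constant; $x_i(t)=x_i(p(t))$. Each good has a warehouse with stock $s_i(t)$, $\frac{ds_i}{dt}=w_i-x_i(t)$, target $s_i^*$, parameter $\kappa>0$, and target demand $\tilde w_i(t)=w_i+\kappa(s_i(t)-s_i^* )$. $\tau_i(t)$ is the last update time of $p_i$ that is $\le t$; $\bar x_i(t)=\frac{1}{t-\tau_i(t)}\int_{\tau_i(t)}^tx_i(s)ds$ (and $\bar x_i=x_i$ when $t=\tau_i(t)$). $\mathrm{span}(a,b,c)=\max-\min$ of $a,b,c$. Potential $\phi=\sum_i\phi_i$, $\phi_i=p_i\big[\mathrm{span}(x_i,\bar x_i,\tilde w_i)-\lambda\alpha_1(t-\tau_i)|\bar x_i-\tilde w_i|+\alpha_2|\tilde w_i-w_i|\big]$, with constants $\lambda,\alpha_1,\alpha_2>0$. *)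

From Stdlib Require Import Reals.
Open Scope R_scope.

(* rsum n f = f 0 + ... + f (n-1)  (goods are indexed by 0..n-1) *)
Fixpoint rsum (n : nat) (f : nat -> R) : R :=
  match n with
  | O => 0
  | S k => rsum k f + f k
  end.

Definition span3 (a b c : R) : R :=
  Rmax a (Rmax b c) - Rmin a (Rmin b c).

Definition avg (f : R -> R) (a t : R) (H : Riemann_integrable f a t) : R :=
  if Req_EM_T t a then f t else RiemannInt H / (t - a).

Definition target (w kappa s sstar : R) : R := w + kappa * (s - sstar).

Definition phi_i (lam a1 a2 p x xbar tw w t tau : R) : R :=
  p * (span3 x xbar tw - lam * a1 * (t - tau) * Rabs (xbar - tw) + a2 * Rabs (tw - w)).

From Stdlib Require Import Reals Lra.
Open Scope R_scope.

(* Since [w - x <= |x - w~| + |w~ - w|] and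
   [|x - w~|], [|xbar - w~|] are both bounded by the span, the bracket of [phi_i]
   is at least [(1 - lam a1) (w - x)] as soon as [t - tau <= 1] and [a2 >= 1];
   hence [w p <= phi_i / (1 - lam a1) + p x].  Summing over the goods and using
   the budget bound [sum p x <= M] gives the claim. *)

Lemma Rabs_sub_le_span3_l (a b c : R) : Rabs (a - c) <= span3 a b c.
Proof.
  unfold span3, Rmax, Rmin.
  repeat destruct Rle_dec; unfold Rabs; destruct Rcase_abs; lra.
Qed.

Lemma Rabs_sub_le_span3_m (a b c : R) : Rabs (b - c) <= span3 a b c.
Proof.
  unfold span3, Rmax, Rmin.
  repeat destruct Rle_dec; unfold Rabs; destruct Rcase_abs; lra.
Qed.

Lemma phi_bracket_lower_bound (la a2 d x xb tw w : R) :
  0 <= la < 1 -> 0 <= d <= 1 -> 1 <= a2 ->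
  (1 - la) * (w - x) <=
    span3 x xb tw - la * d * Rabs (xb - tw) + a2 * Rabs (tw - w).
Proof.
  intros Hla Hd Ha2.
  pose proof (Rabs_sub_le_span3_l x xb tw) as Hspan_x.
  pose proof (Rabs_sub_le_span3_m x xb tw) as Hspan_xb.
  pose proof (Rabs_pos (xb - tw)). pose proof (Rabs_pos (tw - w)).
  assert (Hdev : w - x <= Rabs (x - tw) + Rabs (tw - w)).
  { unfold Rabs; repeat destruct Rcase_abs; lra. }
  assert (Hpenalty : la * d * Rabs (xb - tw) <= la * span3 x xb tw).
  { assert (0 <= la * Rabs (xb - tw)) by (apply Rmult_le_pos; lra).
    assert (la * d * Rabs (xb - tw) <= la * Rabs (xb - tw)) by nra.
    nra. }
  assert (Hreserve : (1 - la) * Rabs (tw - w) <= a2 * Rabs (tw - w)) by nra.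
  nra.
Qed.

Lemma revenue_le_phi_i (lam a1 a2 p x xb tw w t tau : R) :
  0 < p -> 0 <= lam * a1 < 1 -> 1 <= a2 -> 0 <= t - tau <= 1 ->
  w * p <= phi_i lam a1 a2 p x xb tw w t tau / (1 - lam * a1) + p * x.
Proof.
  intros Hp Hla Ha2 Hd.
  pose proof (phi_bracket_lower_bound (lam * a1) a2 (t - tau) x xb tw w Hla Hd Ha2)
    as Hbracket.
  unfold phi_i.
  apply Rle_trans with (p * ((1 - lam * a1) * (w - x)) / (1 - lam * a1) + p * x).
  - right. field. lra.
  - apply Rplus_le_compat_r, Rmult_le_compat_r.
    + apply Rlt_le, Rinv_0_lt_compat; lra.
    + apply Rmult_le_compat_l; lra.
Qed.

Lemma rsum_le_div_plus (n : nat) (f g h : nat -> R) (c : R) : 0 < c ->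
  (forall i, (i < n)%nat -> f i <= g i / c + h i) ->
  rsum n f <= rsum n g / c + rsum n h.
Proof.
  intros Hc; induction n as [|n IHn]; simpl; intros Hfgh.
  - unfold Rdiv; lra.
  - pose proof (IHn (fun i Hi => Hfgh i (Nat.lt_lt_succ_r _ _ Hi))).
    pose proof (Hfgh n (Nat.lt_succ_diag_r n)).
    replace ((rsum n g + g n) / c) with (rsum n g / c + g n / c) by (field; lra).
    lra.
Qed.

Theorem mainTheorem12
  (n : nat) (w : nat -> R) (M : R)
  (xd : (nat -> R) -> nat -> R)          (* demand functions x_i(p) *)
  (p : R -> nat -> R)                    (* price vector p(t) *)
  (s : nat -> R -> R) (sstar0 : nat -> R) (kappa lam a1 a2 : R)
  (t : R) (tau : nat -> R)               (* tau i = tau_i(t) *)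
  (Hw : forall i, (i < n)%nat -> 0 < w i)
  (HM : 0 < M)
  (Hxd : forall q : nat -> R, (forall j, (j < n)%nat -> 0 < q j) ->
           forall i, (i < n)%nat -> 0 < xd q i)
  (Hp : forall u, 0 <= u -> forall j, (j < n)%nat -> 0 < p u j)
  (Hpc : forall j u, (j < n)%nat -> 0 <= u ->
           exists d, 0 < d /\ forall v, u <= v < u + d -> p v j = p u j)
  (Hk : 0 < kappa) (Hlam : 0 < lam) (Ha1 : 0 < a1) (Ha2 : 0 < a2)
  (hs : forall i u, Riemann_integrable (fun v => w i - xd (p v) i) 0 u)
  (Hs : forall i u, (i < n)%nat -> 0 <= u -> s i u = s i 0 + RiemannInt (hs i u))
  (Ht : 0 <= t)
  (Htau : forall i, (i < n)%nat -> 0 <= tau i <= t)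
  (Htau_const : forall i u, (i < n)%nat -> tau i <= u <= t -> p u i = p (tau i) i)
  (Htau_upd : forall i, (i < n)%nat ->
     tau i = 0 \/ exists d, 0 < d /\ forall u, tau i - d < u < tau i -> p u i <> p (tau i) i)
  (hint : forall i, Riemann_integrable (fun u => xd (p u) i) (tau i) t)
  (Ha2ge : 1 <= a2) (Hla : lam * a1 < 1)
  (Hd : forall i, (i < n)%nat -> t - tau i <= 1)
  (Hbud : rsum n (fun i => p t i * xd (p t) i) <= M) :
  rsum n (fun i => w i * p t i) <=
    rsum n (fun i => phi_i lam a1 a2 (p t i) (xd (p t) i)
                       (avg (fun u => xd (p u) i) (tau i) t (hint i))
                       (target (w i) kappa (s i t) (sstar0 i)) (w i) t (tau i))
      / (1 - lam * a1) + M.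
Proof.
  apply Rle_trans with (2 := Rplus_le_compat_l _ _ _ Hbud).
  apply rsum_le_div_plus; [lra|].
  intros i Hi.
  pose proof (Htau i Hi). pose proof (Hd i Hi).
  apply revenue_le_phi_i; [exact (Hp t Ht i Hi) | split; [apply Rmult_le_pos; lra | lra] | exact Ha2ge | lra].
Qed.
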